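(* Let $n\in\mathbb{N}$ and $\lambda\in(0,n)$. If the algorithm $C_\lambda$ (on inputs in $\{0,1\}^n$) is $(\varepsilon,\delta)$-differentially private, then the bit-sum protocol $P_{n,\lambda}$ is $(\varepsilon,\delta)$-differentially private in the shuffled model.
   Context: An algorithm $M$ on datasets in $\{0,1\}^n$ is $(\varepsilon,\delta)$-differentially private if for all $X,X'$ differing in one coordinate and every set $T$ of outputs, $\Pr[M(X)\in T]\le e^{\varepsilon}\Pr[M(X')\in T]+\delta$. The bit-sum protocol $P_{n,\lambda}$: each of $n$ users with $x_i\in\{0,1\}$ independently draws $b\sim\mathrm{Ber}(\lambda/n)$ and sends $y_i=x_i$ if $b=0$ and a fresh $\mathrm{Ber}(1/2)$ bit if $b=1$; a shuffler outputs $(y_1,\dots,y_n)$ in uniformly random order; the analyzer outputs $\frac{n}{n-\lambda}(\sum_i y_i-\lambda/2)$. $P_{n,\lambda}$ is $(\varepsilon,\delta)$-differentially private in the shuffled model if the map from $(x_1,\dots,x_n)$ to the shuffled sequence of messages is $(\varepsilon,\delta)$-differentially private. The algorithm $C_\lambda$ on input $(x_1,\dots,x_n)$: sample $s\sim\mathrm{Bin}(n,\lambda/n)$; choose $H\subseteq[n]$ uniformly among sets of size $s$; output $\sum_{i\notin H}x_i+B$ with $B\sim\mathrm{Bin}(s,1/2)$ independent. *)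

From mathcomp Require Import all_boot all_order all_algebra all_fingroup.
From mathcomp Require Import all_classical all_reals.
From mathcomp Require Import sequences exp.
Set Implicit Arguments. Unset Strict Implicit. Unset Printing Implicit Defensive.
Import Order.TTheory GRing.Theory Num.Theory.
Local Open Scope ring_scope.

Section Defs.
Variable R : realType.

Definition dataset (n : nat) := {ffun 'I_n -> bool}.

Definition neighbors (n : nat) (X X' : dataset n) : Prop :=
  exists i : 'I_n, X i != X' i /\ forall j : 'I_n, j != i -> X j = X' j.

(* (eps,delta)-DP of a randomized algorithm with finite output type O,
   given by its output distribution M X o = Pr[M(X) = o]. *)
Definition is_DP (n : nat) (O : finType) (M : dataset n -> O -> R)
  (eps delta : R) : Prop :=
  forall X X' : dataset n, neighbors X X' ->
  forall T : {set O},
    \sum_(o in T) M X o <= expR eps * \sum_(o in T) M X' o + delta.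

Definition binom_pmf (m : nat) (q : R) (k : nat) : R :=
  ('C(m, k))%:R * q ^+ k * (1 - q) ^+ (m - k).

(* Output distribution of C_lambda: s ~ Bin(n, lam/n); H uniform among
   subsets of [n] of size s; output sum_{i notin H} x_i + B, B ~ Bin(s,1/2).
   Outputs lie in {0,...,n}. *)
Definition C_alg (n : nat) (lam : R) (X : dataset n) (k : 'I_n.+1) : R :=
  \sum_(s < n.+1) binom_pmf n (lam / n%:R) s *
    \sum_(H : {set 'I_n} | #|H| == s)
      (#|[set H' : {set 'I_n} | #|H'| == s]|%:R)^-1 *
      \sum_(b < s.+1) binom_pmf s (2^-1) b *
        ((\sum_(i | i \notin H) (X i : nat) + b)%N == k :> nat)%:R.

(* Local randomizer: with prob. lam/n send a fresh Ber(1/2) bit,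
   otherwise send x.  Pr[y = c | x]. *)
Definition randomizer (n : nat) (lam : R) (x c : bool) : R :=
  (1 - lam / n%:R) * (x == c)%:R + (lam / n%:R) * 2^-1.

Definition messages (n : nat) (lam : R) (X : dataset n) (Y : dataset n) : R :=
  \prod_(i < n) randomizer n lam (X i) (Y i).

(* Output of the shuffler: (y_{s 0}, ..., y_{s (n-1)}) for a uniformly random
   permutation s of [n].  Pr[shuffled sequence = Z]. *)
Definition shuffled_P (n : nat) (lam : R) (X : dataset n) (Z : dataset n) : R :=
  \sum_(Y : dataset n) messages lam X Y *
    (#|[set s : 'S_n | [forall i, Z i == Y (s i)]]|%:R / (factorial n)%:R).

End Defs.

(* Shuffling erases everything but the multiset of messages, i.e. their number
   of ones, so Pr[P(X) in T] = sum_k Pr[sum_i y_i = k] g(k), where g(k) in [0,1]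
   is the probability that a uniformly shuffled sequence with k ones lies in T.
   The number of ones among the messages has exactly the law of C_lambda(X):
   expanding both over the set H of users that send a fresh bit, each equals
     sum_H (lambda/(2n))^|H| (1-lambda/n)^(n-|H|) #{A <= H | x(~H) + |A| = k},
   where x(~H) is the number of ones among the inputs of the users outside H.
   An (eps, delta) bound on all events extends to all [0,1]-valued test
   functions, and is applied to g.  The identity of the two laws is purely
   algebraic. *)

From mathcomp Require Import all_boot all_order all_algebra all_fingroup.
From mathcomp Require Import all_classical all_reals.
From mathcomp Require Import sequences exp.
From mathcomp Require Import ring lra.
Set Implicit Arguments. Unset Strict Implicit. Unset Printing Implicit Defensive.
Import Order.TTheory GRing.Theory Num.Theory.
Local Open Scope ring_scope.

Lemma event_bound_weighted (R : realFieldType) (O : finType) (a b g : O -> R) (e d : R) :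
  (forall T : {set O}, \sum_(o in T) a o <= e * \sum_(o in T) b o + d) ->
  (forall o, 0 <= g o <= 1) ->
  \sum_o a o * g o <= e * \sum_o b o * g o + d.
Proof.
move=> event_bound g01.
(* The worst test function is the indicator of the set where [a] exceeds [e * b]. *)
pose S := [set o | e * b o < a o].
have weighted_le_S : \sum_o (a o - e * b o) * g o <= \sum_(o in S) (a o - e * b o).
  rewrite (bigID (mem S)) /= -[leRHS]addr0; apply: lerD.
    apply: ler_sum => o; rewrite inE => So; have /andP[_ g1] := g01 o.
    by rewrite ler_piMr // subr_ge0 ltW.
  apply: sumr_le0 => o; rewrite inE -leNgt => notSo; have /andP[g0 _] := g01 o.
  by rewrite mulr_le0_ge0 // subr_le0.
have := event_bound S; move: weighted_le_S.
rewrite sumrB -mulr_sumr; under eq_bigr do rewrite mulrBl -mulrA.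
by rewrite sumrB -mulr_sumr; lra.
Qed.

Lemma partition_big_ord (V : nmodType) (T : finType) m (P : pred T) (f : T -> nat)
    (F : T -> V) :
  (forall x, P x -> f x <= m)%N ->
  \sum_(x | P x) F x = \sum_(k < m.+1) \sum_(x | P x && (f x == k)) F x.
Proof.
move=> f_le; rewrite (partition_big (fun x => inord (f x) : 'I_m.+1) xpredT) //=.
apply: eq_bigr => k _; apply: eq_bigl => x; case Px: (P x) => //=.
by rewrite -val_eqE /= inordK // ltnS f_le.
Qed.

Lemma sum_subsets_card (V : nmodType) (T : finType) (H : {set T}) (f : nat -> V) :
  \sum_(A : {set T} | A \subset H) f #|A| = \sum_(b < #|H|.+1) f b *+ 'C(#|H|, b).
Proof.
rewrite (partition_big_ord _ (fun A : {set T} => @subset_leq_card _ A H)).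
apply: eq_bigr => b _; rewrite (eq_bigr (fun=> f b)) => [|A /andP[_ /eqP->] //].
by rewrite sumr_const -cards_draws cardsE.
Qed.

Lemma card_set_ord_le n (H : {set 'I_n}) : (#|H| <= n)%N.
Proof. by rewrite -[leqRHS]card_ord max_card. Qed.

Definition weight n (Y : dataset n) : nat := \sum_(i < n) (Y i : nat).

Lemma count_true_mktuple n (Y : dataset n) : count_mem true (mktuple Y) = weight Y.
Proof.
rewrite /weight -sum1_count big_map -big_enum /= big_mkcond; apply: eq_bigr => i _.
by case: (Y i).
Qed.

Lemma perm_of_weight_eq n (Y Y' : dataset n) :
  weight Y = weight Y' -> exists t : 'S_n, Y' = [ffun i => Y (t i)].
Proof.
move=> eq_weight.
have count_false (s : seq bool) : count_mem false s = (size s - count_mem true s)%N.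
  by rewrite -(count_predC (pred1 true)) addKn; apply: eq_count => -[].
have /tuple_permP[t /(congr1 (nth false)) def_Y'] : perm_eq (mktuple Y') (mktuple Y).
  by apply/allP => -[] _; rewrite /= ?count_false ?size_tuple !count_true_mktuple eq_weight.
exists t; apply/ffunP => i; have := congr1 (@^~ (i : nat)) def_Y'.
by rewrite ffunE /= !nth_mktuple tnth_mktuple.
Qed.

Lemma weight_le n (Y : dataset n) : (weight Y <= n)%N.
Proof.
by rewrite -[leqRHS]card_ord -sum1_card; apply: leq_sum => i _; apply: leq_b1.
Qed.

Definition prefix_dataset n (j : nat) : dataset n := [ffun i : 'I_n => (i < j)%N].

Lemma weight_prefix n j : (j <= n)%N -> weight (prefix_dataset n j) = j.
Proof.
move=> le_jn; rewrite /weight.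
under eq_bigr do rewrite ffunE.
rewrite -(big_mkord xpredT (fun i => (i < j)%N : nat)) (big_cat_nat (leq0n j) le_jn) /=.
rewrite big_nat_cond (eq_bigr (fun=> 1%N)) => [|i /andP[/andP[_ ->]]] //.
rewrite -big_nat_cond sum_nat_const_nat muln1 subn0 big_nat_cond big1 ?addn0 //.
by move=> i /andP[/andP[le_ji _] _]; rewrite ltnNge le_ji.
Qed.

Definition shuffle_count n (T : {set dataset n}) (Y : dataset n) : nat :=
  #|[set s : 'S_n | [ffun i => Y (s i)] \in T]|.

Lemma shuffled_P_event (R : realType) n (lam : R) (X : dataset n)
    (T : {set dataset n}) :
  \sum_(Z in T) shuffled_P lam X Z =
  \sum_Y messages lam X Y * ((shuffle_count T Y)%:R / n`!%:R).
Proof.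
rewrite /shuffled_P exchange_big /=; apply: eq_bigr => Y _.
rewrite -mulr_sumr -mulr_suml -natr_sum /shuffle_count -sum1_card.
rewrite (partition_big (fun s : 'S_n => [ffun i => Y (s i)] : dataset n) (mem T)) => [|s];
  last by rewrite inE.
congr (_ * (_%:R / _)); apply: eq_bigr => Z ZT; rewrite -sum1_card; apply: eq_bigl => s.
rewrite !inE; apply/forallP/andP => [Z_Ys | [_ /eqP <- i]]; last by rewrite ffunE.
suff -> : [ffun i => Y (s i)] = Z by rewrite ZT.
by apply/ffunP => i; rewrite ffunE (eqP (Z_Ys i)).
Qed.

Lemma shuffle_count_le n (T : {set dataset n}) (Y : dataset n) :
  (shuffle_count T Y <= n`!)%N.
Proof. by rewrite -card_Sn; apply: max_card. Qed.

Lemma shuffle_count_perm n (T : {set dataset n}) (Y : dataset n) (t : 'S_n) :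
  shuffle_count T [ffun i => Y (t i)] = shuffle_count T Y.
Proof.
rewrite /shuffle_count -!sum1_card [RHS](reindex_inj (mulIg t)) /=.
by apply: eq_bigl => s; rewrite !inE; congr (_ \in T); apply/ffunP => i; rewrite !ffunE permM.
Qed.

Lemma shuffle_count_weight n (T : {set dataset n}) (Y : dataset n) :
  shuffle_count T Y = shuffle_count T (prefix_dataset n (weight Y)).
Proof.
have [t def_Y] : exists t : 'S_n, Y = [ffun i => prefix_dataset n (weight Y) (t i)].
  by apply: perm_of_weight_eq; rewrite weight_prefix // weight_le.
by rewrite {1}def_Y shuffle_count_perm.
Qed.

Lemma prodr_indicator (R : pzSemiRingType) (I : finType) (P B : pred I) :
  \prod_(i | P i) (B i)%:R = [forall (i | P i), B i]%:R :> R.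
Proof.
by rewrite -big_andE; elim/big_rec2: _ => // i x b _ ->; rewrite -natrM mulnb.
Qed.

Lemma binom_pmf_half (R : realType) s b :
  (b <= s)%N -> binom_pmf s (2^-1 : R) b = 'C(s, b)%:R / 2 ^+ s.
Proof.
move=> le_bs; have half : 1 - 2^-1 = 2^-1 :> R by field.
by rewrite /binom_pmf half -mulrA -exprD subnKC // exprVn.
Qed.

Section RandomizedSubsets.
Variables (R : realType) (n : nat) (lam : R) (X : dataset n).
Let p := lam / n%:R.

(* The probability that exactly the users in [H] send a fresh bit and that these
   bits form one prescribed pattern. *)
Definition flip_weight (H : {set 'I_n}) : R := (p / 2) ^+ #|H| * (1 - p) ^+ (n - #|H|).

Definition kept_ones (H : {set 'I_n}) : nat := \sum_(i | i \notin H) (X i : nat).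

Definition completions (k : nat) (H : {set 'I_n}) : R :=
  \sum_(A : {set 'I_n} | A \subset H) ((kept_ones H + #|A|)%N == k)%:R.

Lemma C_alg_subsets (k : 'I_n.+1) :
  C_alg lam X k = \sum_H flip_weight H * completions k H.
Proof.
rewrite /C_alg [RHS](partition_big_ord _ (fun H _ => card_set_ord_le H)).
apply: eq_bigr => s _; rewrite mulr_sumr; apply: eq_big => // H /eqP card_H.
rewrite /completions (sum_subsets_card H (fun b => ((kept_ones H + b)%N == k)%:R)).
rewrite card_H card_draws card_ord.
have -> : \sum_(b < s.+1) binom_pmf s (2^-1 : R) b * ((kept_ones H + b)%N == k)%:R =
    (2 ^+ s)^-1 * \sum_(b < s.+1) ((kept_ones H + b)%N == k)%:R *+ 'C(s, b).
  rewrite mulr_sumr; apply: eq_bigr => b _.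
  by rewrite binom_pmf_half -1?mulr_natr; [ring | rewrite -ltnS].
have binom_neq0 : 'C(n, s)%:R != 0 :> R by rewrite pnatr_eq0 -lt0n bin_gt0 -ltnS.
rewrite /flip_weight card_H /binom_pmf -/p [(p / 2) ^+ _]expr_div_n.
by field; rewrite binom_neq0 expf_neq0 ?pnatr_eq0.
Qed.

Definition agrees_off (H : {set 'I_n}) (Y : dataset n) : bool :=
  [forall (i | i \notin H), X i == Y i].

Lemma messages_subsets (Y : dataset n) :
  messages lam X Y = \sum_H flip_weight H * (agrees_off H Y)%:R.
Proof.
rewrite /messages /randomizer -/p.
under eq_bigr do rewrite addrC.
rewrite bigA_distr; apply: eq_bigr => H _.
rewrite (bigID (mem H)) /= (eq_bigr (fun=> p / 2)) => [|i ->] //.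
rewrite [Q in _ * Q](eq_bigr (fun i => (1 - p) * (X i == Y i)%:R)) => [|i notHi];
  last by rewrite (negbTE notHi).
rewrite prodr_const [Q in _ * Q]big_split /= prodr_const prodr_indicator mulrA.
have card_off : #|(fun i => i \notin H)| = (n - #|H|)%N.
  by apply/eqP; rewrite -(eqn_add2l #|H|) subnKC ?card_set_ord_le // cardC card_ord.
by rewrite card_off.
Qed.

(* The messages when the users in [H] send fresh bits, [A] being those equal to 1. *)
Definition overwrite (H A : {set 'I_n}) : dataset n :=
  [ffun i => if i \in H then i \in A else X i].

Lemma agrees_off_overwrite (H A : {set 'I_n}) : agrees_off H (overwrite H A).
Proof. by apply/forall_inP => i /negbTE notHi; rewrite ffunE notHi. Qed.

Lemma weight_overwrite (H A : {set 'I_n}) :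
  A \subset H -> weight (overwrite H A) = (kept_ones H + #|A|)%N.
Proof.
move=> sub_AH; rewrite /weight /kept_ones (bigID (mem H)) addnC /=; congr addn.
  rewrite -sum1_card big_mkcond [RHS]big_mkcond /=; apply: eq_bigr => i _.
  by rewrite ffunE; case: (boolP (i \in A)) => [/(fintype.subsetP sub_AH) -> |]; case: (i \in H).
by apply: eq_bigr => i /negbTE notHi; rewrite ffunE notHi.
Qed.

Lemma overwrite_restrict (H : {set 'I_n}) (Y : dataset n) :
  agrees_off H Y -> overwrite H [set i in H | Y i] = Y.
Proof.
move/forall_inP=> agree; apply/ffunP => i; rewrite ffunE inE.
by case: (boolP (i \in H)) => // /agree /eqP.
Qed.

Lemma weight_agrees_off (k : nat) (H : {set 'I_n}) :
  \sum_(Y | weight Y == k) (agrees_off H Y)%:R = completions k H.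
Proof.
transitivity (\sum_(Y | agrees_off H Y) (weight Y == k)%:R : R).
  by rewrite big_mkcond [RHS]big_mkcond; apply: eq_bigr => Y _; do 2!case: ifP.
rewrite (reindex_onto (overwrite H) (fun Y => [set i in H | Y i])) => [|Y]; last first.
  exact: overwrite_restrict.
apply: eq_big => [A | A /andP[_ /eqP <-]]; last by rewrite weight_overwrite // setIdE subsetIl.
rewrite agrees_off_overwrite /=; apply/eqP/idP => [<- | sub_AH]; first by rewrite setIdE subsetIl.
apply/setP => i; rewrite !inE ffunE.
by case: (boolP (i \in A)) => [/(fintype.subsetP sub_AH) -> |]; case: (i \in H).
Qed.

Lemma messages_weight (k : 'I_n.+1) :
  \sum_(Y | weight Y == k) messages lam X Y = C_alg lam X k.
Proof.
under eq_bigr do rewrite messages_subsets.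
rewrite exchange_big C_alg_subsets; apply: eq_bigr => H _.
by rewrite -weight_agrees_off mulr_sumr.
Qed.

End RandomizedSubsets.

Lemma shuffled_P_event_C_alg (R : realType) n (lam : R) (X : dataset n)
    (T : {set dataset n}) :
  \sum_(Z in T) shuffled_P lam X Z =
  \sum_(k < n.+1) C_alg lam X k * ((shuffle_count T (prefix_dataset n k))%:R / n`!%:R).
Proof.
rewrite shuffled_P_event (partition_big_ord _ (fun Y _ => weight_le Y)).
apply: eq_bigr => k _; rewrite -messages_weight mulr_suml.
by apply: eq_bigr => Y /eqP <-; rewrite -shuffle_count_weight.
Qed.

Theorem claim4p3 (R : realType) (n : nat) (lam eps delta : R) :
  0 < lam -> lam < n%:R ->
  is_DP (C_alg (n:=n) lam) eps delta ->
  is_DP (shuffled_P (n:=n) lam) eps delta.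
Proof.
move=> _ _ C_dp X X' XX' T.
rewrite !shuffled_P_event_C_alg; apply: event_bound_weighted (C_dp X X' XX') _ => k.
by rewrite divr_ge0 ?ler0n //= ler_pdivrMr ?ltr0n ?fact_gt0 // mul1r ler_nat shuffle_count_le.
Qed.
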